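(* There is a constant $c$ such that for all positive integers $k,v$ there is a first-order formula $\alpha_k(g;x_1,\dots,x_k)$ in the language of monoids with $|\alpha_k|\le c(k+\log v)$ such that for every group $G$ with $|G|\le v$ and all $g,x_1,\dots,x_k\in G$: $G\models\alpha_k(g;x_1,\dots,x_k)$ if and only if $g\in\langle x_1,\dots,x_k\rangle$.
   Context: The length $|\phi|$ of a formula is its number of symbols, each variable counting as a single symbol. Here $\log m=\min\{r\in\mathbb N: 2^r\ge m\}$. $\langle x_1,\dots,x_k\rangle$ is the subgroup generated by $x_1,\dots,x_k$. *)

From mathcomp Require Import all_boot all_fingroup.
Set Implicit Arguments. Unset Strict Implicit. Unset Printing Implicit Defensive.

Inductive mterm : Type :=
  | TVar of nat
  | TOne
  | TMul of mterm & mterm.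

Inductive mformula : Type :=
  | FEq of mterm & mterm
  | FTrue
  | FFalse
  | FNot of mformula
  | FAnd of mformula & mformula
  | FOr of mformula & mformula
  | FImp of mformula & mformula
  | FEx of nat & mformula
  | FAll of nat & mformula.

(* Length = number of symbols (Polish/prefix notation, so no brackets);  *)
(* each variable occurrence counts as a single symbol, as does each     *)
(* operation, constant, relation, connective and quantifier symbol.     *)
Fixpoint tlen (t : mterm) : nat :=
  match t with
  | TVar _ => 1
  | TOne => 1
  | TMul t1 t2 => (tlen t1 + tlen t2).+1
  end.

Fixpoint flen (f : mformula) : nat :=
  match f with
  | FEq t1 t2 => (tlen t1 + tlen t2).+1
  | FTrue | FFalse => 1
  | FNot f1 => (flen f1).+1
  | FAnd f1 f2 | FOr f1 f2 | FImp f1 f2 => (flen f1 + flen f2).+1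
  | FEx _ f1 | FAll _ f1 => (flen f1).+2
  end.

Fixpoint teval (gT : finGroupType) (e : nat -> gT) (t : mterm) : gT :=
  match t with
  | TVar i => e i
  | TOne => 1%g
  | TMul t1 t2 => (teval e t1 * teval e t2)%g
  end.

Definition upd (gT : finGroupType) (e : nat -> gT) (i : nat) (a : gT) :=
  fun j => if j == i then a else e j.

Fixpoint holds (gT : finGroupType) (e : nat -> gT) (f : mformula) : Prop :=
  match f with
  | FEq t1 t2 => teval e t1 = teval e t2
  | FTrue => True
  | FFalse => False
  | FNot f1 => ~ holds e f1
  | FAnd f1 f2 => holds e f1 /\ holds e f2
  | FOr f1 f2 => holds e f1 \/ holds e f2
  | FImp f1 f2 => holds e f1 -> holds e f2
  | FEx i f1 => exists a : gT, holds (upd e i a) f1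
  | FAll i f1 => forall a : gT, holds (upd e i a) f1
  end.

(* The powers X^n of X = {1, x_1, ..., x_k} increase with n and stay constant from the first n
   with X^(n+1) = X^n on; counting elements, this happens before n = |G|, so
   <x_1, ..., x_k> = X^(2^r) for r = log v whenever |G| <= v.  Membership of y in X^(2^(r+1))
   reads "y = a b for some a, b such that every w in {a, b} lies in X^(2^r)"; quantifying over
   w lets the formula for X^(2^r) occur only once, so each doubling costs a constant number of
   symbols and the whole formula has length O(k + r). *)
From mathcomp Require Import all_boot all_fingroup.
From mathcomp Require Import zify.
Set Implicit Arguments. Unset Strict Implicit. Unset Printing Implicit Defensive.

Section GenPowers.
Variables (gT : finGroupType) (A : {set gT}).
Local Open Scope group_scope.
Local Notation B := (1 |: A).

Lemma expUg1_sub_gen n : B ^+ n \subset <<A>>.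
Proof.
by elim: n => [|n IHn]; rewrite ?expgS ?mul_subG ?subUset ?sub1G ?subset_gen.
Qed.

Lemma expUg1S n : B ^+ n \subset B ^+ n.+1.
Proof. by rewrite expgSr -{1}[B ^+ n]mulg1 mulgS // sub1set setU11. Qed.

Lemma expUg1_mono m n : (m <= n)%N -> B ^+ m \subset B ^+ n.
Proof.
move/subnKC <-; elim: (n - m)%N => [|d IHd]; first by rewrite addn0.
by rewrite addnS (subset_trans IHd) ?expUg1S.
Qed.

Lemma expUg1_stable i n : B ^+ i.+1 \subset B ^+ i -> (i <= n)%N -> B ^+ n = B ^+ i.
Proof.
move=> fixBi /subnKC <-; elim: (n - i)%N => [|d IHd]; first by rewrite addn0.
apply/eqP; rewrite eqEsubset (expUg1_mono (leq_addr _ _)) andbT.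
by rewrite addnS expgSr IHd -expgSr.
Qed.

Lemma card_expUg1_growth n :
  (forall i, (i < n)%N -> ~~ (B ^+ i.+1 \subset B ^+ i)) -> (n < #|B ^+ n|)%N.
Proof.
elim: n => [|n IHn] growB; first by rewrite cards1.
apply: leq_ltn_trans (IHn (fun i lt_in => growB i (ltnW lt_in))) (proper_card _).
by rewrite /proper expUg1S growB.
Qed.

Lemma expUg1_fixpoint : exists2 i, (i < #|gT|)%N & B ^+ i.+1 \subset B ^+ i.
Proof.
have [/existsP[i fixBi] | no_fix] := boolP [exists i : 'I_#|gT|, B ^+ i.+1 \subset B ^+ i].
  by exists i.
suff: (#|gT| < #|B ^+ #|gT| |)%N by rewrite ltnNge max_card.
apply: card_expUg1_growth => i lt_iN; apply: contra no_fix => fixBi.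
by apply/existsP; exists (Ordinal lt_iN).
Qed.

Lemma gen_expUg1 m : (#|gT| <= m)%N -> <<A>> = B ^+ m.
Proof.
move=> le_Nm; have [n defA] := gen_expgs A; have [i lt_iN fixBi] := expUg1_fixpoint.
have le_im : (i <= m)%N := ltnW (leq_trans lt_iN le_Nm).
apply/eqP; rewrite eqEsubset expUg1_sub_gen andbT defA.
rewrite (expUg1_stable fixBi le_im) -(@expUg1_stable i (maxn n m)) //.
  by rewrite expUg1_mono ?leq_maxl.
by rewrite (leq_trans le_im) ?leq_maxr.
Qed.

End GenPowers.

Fixpoint fone_or_vars (z n : nat) : mformula :=
  match n with
  | 0 => FEq (TVar z) TOne
  | n'.+1 => FOr (FEq (TVar z) (TVar n)) (fone_or_vars z n')
  end.

Definition fsq (v y z : nat) (psi : mformula) : mformula :=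
  FEx y (FEx z (FAnd (FEq (TVar v) (TMul (TVar y) (TVar z)))
    (FAll v (FImp (FOr (FEq (TVar v) (TVar y)) (FEq (TVar v) (TVar z))) psi)))).

(* Variables 1..k hold the generators, k.+1 the element tested, k.+2 and k.+3 the factors. *)
Fixpoint fgen_pow (k r : nat) : mformula :=
  match r with
  | 0 => fone_or_vars k.+1 k
  | r'.+1 => fsq k.+1 k.+2 k.+3 (fgen_pow k r')
  end.

Definition fgen (k r : nat) : mformula :=
  FEx k.+1 (FAnd (FEq (TVar k.+1) (TVar 0)) (fgen_pow k r)).

Lemma flen_fone_or_vars z n : flen (fone_or_vars z n) = 3 + 4 * n.
Proof. by elim: n => [|n IHn] //=; rewrite IHn; lia. Qed.

Lemma flen_fgen k r : flen (fgen k r) = 9 + 4 * k + 20 * r.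
Proof.
suff flen_pow : flen (fgen_pow k r) = 3 + 4 * k + 20 * r by rewrite /= flen_pow; lia.
by elim: r => [|r IHr] /=; rewrite ?flen_fone_or_vars ?IHr; lia.
Qed.

Section Semantics.
Variable gT : finGroupType.
Local Open Scope group_scope.
Implicit Types (e : nat -> gT) (S : {set gT}).

Lemma upd_same e i a : upd e i a i = a.
Proof. by rewrite /upd eqxx. Qed.

Lemma upd_other e i j a : j != i -> upd e i a j = e j.
Proof. by rewrite /upd => /negbTE->. Qed.

Lemma map_upd_iota e k j a : (k < j)%N -> map (upd e j a) (iota 1 k) = map e (iota 1 k).
Proof.
move=> lt_kj; apply/eq_in_map => i; rewrite mem_iota => /andP[_ lt_i].
by rewrite upd_other //; apply: contraTneq lt_i => ->; rewrite -ltnNge add1n ltnS.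
Qed.

Lemma map_iota_tuple e k (xs : k.-tuple gT) :
  (forall i : 'I_k, e i.+1 = tnth xs i) -> map e (iota 1 k) = xs.
Proof.
move=> exs; apply: (@eq_from_nth _ 1); rewrite size_map size_iota ?size_tuple //.
move=> i lt_ik; rewrite (nth_map 0) ?size_iota // nth_iota // add1n.
by rewrite (exs (Ordinal lt_ik)) (tnth_nth 1).
Qed.

Lemma holds_fone_or_vars e z n : holds e (fone_or_vars z n) <-> e z \in 1 :: map e (iota 1 n).
Proof.
elim: n => [|n IHn]; first by rewrite /= inE; split=> [->|/eqP].
rewrite [holds _ _]/= IHn -addn1 iotaD map_cat -cat_cons mem_cat mem_seq1 add1n addn1 orbC.
by split=> [[->|->] | /orP[/eqP|]]; rewrite ?eqxx ?orbT //; [left|right].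
Qed.

Lemma holds_fsq (E : (nat -> gT) -> Prop) S v y z psi e :
    v != y -> v != z -> y != z ->
    (forall e' j a, j \in [:: v; y; z] -> E e' -> E (upd e' j a)) ->
    (forall e', E e' -> (holds e' psi <-> e' v \in S)) ->
  E e -> (holds e (fsq v y z psi) <-> e v \in S * S).
Proof.
move=> vy vz yz stableE defS Ee.
have [yv zv] : y != v /\ z != v by rewrite !(eq_sym _ v).
pose e_ab a b := upd (upd e y a) z b.
have e_ab_v a b : e_ab a b v = e v by rewrite /e_ab !upd_other.
have e_ab_y a b : e_ab a b y = a by rewrite /e_ab upd_other // upd_same.
have e_ab_z a b : e_ab a b z = b by rewrite /e_ab upd_same.
have Sab a b w : holds (upd (e_ab a b) v w) psi <-> w \in S.
  have /defS : E (upd (e_ab a b) v w).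
    by do 3!(apply: (stableE); first by rewrite !inE eqxx ?orbT).
  by rewrite upd_same.
split=> [[a [b]] | /mulsgP[a b Sa Sb ev_ab]].
  rewrite /= -/(e_ab a b) e_ab_v e_ab_y e_ab_z => -[-> Sab_or].
  apply: mem_mulg; apply/(Sab a b)/Sab_or; rewrite upd_same !upd_other //.
  - by rewrite e_ab_y; left.
  - by rewrite e_ab_z; right.
exists a, b; rewrite /= -/(e_ab a b) e_ab_v e_ab_y e_ab_z; split=> // w.
rewrite upd_same !upd_other // e_ab_y e_ab_z => w_ab; apply/Sab.
by case: w_ab => ->.
Qed.

Section Generators.
Variables (k : nat) (xs : k.-tuple gT).
Local Notation B := (1 |: [set x in (xs : seq gT)]).

Lemma holds_fgen_pow r e :
  map e (iota 1 k) = xs -> (holds e (fgen_pow k r) <-> e k.+1 \in B ^+ (2 ^ r)).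
Proof.
elim: r e => [|r IHr] e exs /=.
  by rewrite holds_fone_or_vars exs expg1 !inE.
rewrite expnS mul2n -addnn expgnDr.
apply: (holds_fsq (E := fun e' => map e' (iota 1 k) = xs)) => //.
1-3: by rewrite ltn_eqF.
move=> e' j a j_new <-; apply: map_upd_iota.
by move: j_new; rewrite !inE => /or3P[] /eqP->; lia.
Qed.

Lemma holds_fgen r e :
  map e (iota 1 k) = xs -> (holds e (fgen k r) <-> e 0 \in B ^+ (2 ^ r)).
Proof.
move=> exs /=; have e0 w : upd e k.+1 w 0 = e 0 by rewrite upd_other.
have exs_w w : map (upd e k.+1 w) (iota 1 k) = xs by rewrite map_upd_iota.
split=> [[w []] | Be0].
  by rewrite /= e0 upd_same => -> /(holds_fgen_pow r (exs_w _)); rewrite upd_same.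
exists (e 0); rewrite /= e0 upd_same; split=> //.
by apply/(holds_fgen_pow r (exs_w _)); rewrite upd_same.
Qed.

End Generators.
End Semantics.

Theorem lemma2p4 :
  exists c : nat, forall k v : nat, 0 < k -> 0 < v ->
    exists alpha : mformula,
      flen alpha <= c * (k + up_log 2 v) /\
      forall (gT : finGroupType), #|gT| <= v ->
        forall (g : gT) (xs : k.-tuple gT) (e : nat -> gT),
          e 0 = g -> (forall i : 'I_k, e i.+1 = tnth xs i) ->
          (holds e alpha <-> g \in <<[set x in (xs : seq gT)]>>%g).
Proof.
exists 29 => k v k_gt0 _; exists (fgen k (up_log 2 v)); split.
  by rewrite flen_fgen; lia.
move=> gT le_Gv g xs e <- exs.
rewrite (gen_expUg1 _ (leq_trans le_Gv (up_logP v (isT : 1 < 2)))).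
exact: holds_fgen (map_iota_tuple exs).
Qed.
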